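(* Let $n\ge k\ge d$ be positive integers. Let $\mathcal{Z}_{n,k,d}\subseteq\mathbb{Q}^{n+d+k}$ be the set of points $(z_1,\dots,z_n;z_{n+1},\dots,z_{n+d};z_{n+d+1},\dots,z_{n+d+k})$ for which there exist an injective function $f:\{n+1,\dots,n+d\}\hookrightarrow\{n+d+1,\dots,n+d+k\}$ with $z_i=z_{f(i)}$ for all $n+1\le i\le n+d$, and a surjective function $g:\{1,\dots,n\}\twoheadrightarrow\{n+1,\dots,n+d\}$ with $z_j=z_{g(j)}$ for all $1\le j\le n$. Let $J^{\mathbb{Q},\mathbf{t}}_{n,k,d}\subseteq\mathbb{Q}[\mathbf{x}_n,\mathbf{y}_d,\mathbf{t}_k]$ be the ideal generated by \begin{itemize} \item $e_r(\mathbf{t}_k) - e_{r-1}(\mathbf{t}_k)h_1(\mathbf{y}_d)+\cdots+(-1)^r h_r(\mathbf{y}_d)$ for all $r>k-d$, \item $e_r(\mathbf{x}_n) - e_{r-1}(\mathbf{x}_n)h_1(\mathbf{y}_d)+\cdots+(-1)^r h_r(\mathbf{y}_d)$ for all $r>n-d$, \item $x_i^d - x_i^{d-1}e_1(\mathbf{y}_d)+\cdots+(-1)^d e_d(\mathbf{y}_d)$ for $i=1,\dots,n$. \end{itemize} Then $J^{\mathbb{Q},\mathbf{t}}_{n,k,d}\subseteq\mathbf{I}(\mathcal{Z}_{n,k,d})$.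
   Context: $\mathbb{Q}[\mathbf{x}_n,\mathbf{y}_d,\mathbf{t}_k]$, with $\mathbf{x}_n=(x_1,\dots,x_n)$, $\mathbf{y}_d=(y_1,\dots,y_d)$, $\mathbf{t}_k=(t_1,\dots,t_k)$, is the coordinate ring of $\mathbb{Q}^{n+d+k}$ (the coordinates in that order), and $\mathbf{I}(\mathcal{Z})$ denotes the ideal of polynomials vanishing on $\mathcal{Z}$. $e_r,h_r$ are elementary and complete homogeneous symmetric polynomials ($e_0=h_0=1$, $e_r=0$ when $r$ exceeds the number of variables). *)

From HB Require Import structures.
From mathcomp Require Import all_boot all_order all_algebra.
From mathcomp Require Import mpoly.

Import Order.TTheory GRing.Theory Num.Theory.
Local Open Scope ring_scope.

(* Elementary symmetric polynomial e_r of a finite family v : 'I_m -> R.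
   e_0 = 1 and e_r = 0 for r > m automatically. *)
Definition esymf (R : comNzRingType) (m : nat) (v : 'I_m -> R) (r : nat) : R :=
  \sum_(S : {set 'I_m} | #|S| == r) \prod_(i in S) v i.

Definition hsymf (R : comNzRingType) (m : nat) (v : 'I_m -> R) (r : nat) : R :=
  \sum_(a : {ffun 'I_m -> 'I_r.+1} | \sum_i (nat_of_ord (a i)) == r)
     \prod_i v i ^+ a i.

(* Variables of Q[x_n, y_d, t_k], coordinates in the order x, y, t. *)
Definition xidx (n d k : nat) (i : 'I_n) : 'I_(n + d + k) :=
  lshift k (lshift d i).
Definition yidx (n d k : nat) (j : 'I_d) : 'I_(n + d + k) :=
  lshift k (rshift n j).
Definition tidx (n d k : nat) (l : 'I_k) : 'I_(n + d + k) :=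
  rshift (n + d) l.

Definition xv (n d k : nat) (i : 'I_n) : {mpoly rat[n + d + k]} := 'X_(xidx n d k i).
Definition yv (n d k : nat) (j : 'I_d) : {mpoly rat[n + d + k]} := 'X_(yidx n d k j).
Definition tv (n d k : nat) (l : 'I_k) : {mpoly rat[n + d + k]} := 'X_(tidx n d k l).

Definition alt_eh (n d k m : nat) (v : 'I_m -> {mpoly rat[n + d + k]}) (r : nat)
  : {mpoly rat[n + d + k]} :=
  \sum_(j < r.+1) (-1) ^+ j * esymf _ m v (r - j) * hsymf _ d (yv n d k) j.

Definition alt_xe (n d k : nat) (i : 'I_n) : {mpoly rat[n + d + k]} :=
  \sum_(j < d.+1) (-1) ^+ j * xv n d k i ^+ (d - j) * esymf _ d (yv n d k) j.

Definition Jgens (n k d : nat) (p : {mpoly rat[n + d + k]}) : Prop :=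
  (exists2 r, (k - d < r)%N & p = alt_eh n d k k (tv n d k) r) \/
  (exists2 r, (n - d < r)%N & p = alt_eh n d k n (xv n d k) r) \/
  (exists i : 'I_n, p = alt_xe n d k i).

Definition ideal_gen (R : comNzRingType) (G : R -> Prop) (p : R) : Prop :=
  exists s : seq (R * R),
    (forall cg, cg \in s -> G cg.2) /\ p = \sum_(cg <- s) cg.1 * cg.2.

Definition J_Qt (n k d : nat) : {mpoly rat[n + d + k]} -> Prop :=
  ideal_gen _ (Jgens n k d).

Definition Zset (n k d : nat) (z : 'I_(n + d + k) -> rat) : Prop :=
  (exists f : 'I_d -> 'I_k, injective f /\
      forall i : 'I_d, z (yidx n d k i) = z (tidx n d k (f i))) /\
  (exists g : 'I_n -> 'I_d, (forall j : 'I_d, exists i : 'I_n, g i = j) /\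
      forall j : 'I_n, z (xidx n d k j) = z (yidx n d k (g j))).

Definition vanishing_ideal (N : nat) (Z : ('I_N -> rat) -> Prop)
  (p : {mpoly rat[N]}) : Prop :=
  forall z, Z z -> p.@[z] = 0.

From HB Require Import structures.
From mathcomp Require Import all_boot all_order all_algebra.
From mathcomp Require Import mpoly.
From mathcomp Require Import zify ring.
Import GRing.Theory.
Local Open Scope ring_scope.

(** Write E_v(X) = prod_i (1 + v_i X), whose coefficients are the e_r(v), and
    H_w(-X) = prod_i 1/(1 + w_i X), whose coefficients are the (-1)^r h_r(w).
    The alternating sum sum_j (-1)^j e_(r-j)(v) h_j(w) is the X^r coefficient of
    E_v(X) H_w(-X).  On Z every y-coordinate equals a t-coordinate (through an
    injection) and an x-coordinate (through a section of the surjection), so in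
    both cases w = y is a subfamily of v and E_v = E_w P with deg P <= #v - d.
    Since E_w(X) H_w(-X) = 1, the product E_v(X) H_w(-X) is P(X) up to terms
    of degree > r, so its X^r coefficient vanishes once r > #v - d.  The third
    family of generators evaluates to prod_j (x_i - y_j), which vanishes since
    x_i equals some y_j. *)

Lemma prod_if_mem (T : comNzRingType) (I : finType) (A : {set I}) (F G : I -> T) :
  \prod_i (if i \in A then F i else G i) = \prod_(i in A) F i * \prod_(i in ~: A) G i.
Proof. by rewrite big_if; congr (_ * _); apply: eq_bigl => i; rewrite ?inE. Qed.

Section SymmetricGeneratingPolynomials.
Context {R : comNzRingType}.

Definition esym_genpoly {m : nat} (v : 'I_m -> R) : {poly R} :=
  \prod_(i < m) (1 + (v i)%:P * 'X).

(* H_w(-X) with each geometric series 1/(1 + w_i X) cut off after degree N. *)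
Definition hsym_genpoly_trunc (N : nat) {d : nat} (w : 'I_d -> R) : {poly R} :=
  \prod_(i < d) \sum_(a < N.+1) (- ((w i)%:P * 'X)) ^+ a.

Lemma coef_esym_genpoly {m : nat} (v : 'I_m -> R) (r : nat) :
  (esym_genpoly v)`_r = esymf R m v r.
Proof.
have -> : esym_genpoly v = \sum_(S : {set 'I_m}) (\prod_(i in S) v i) *: 'X^#|S|.
  rewrite /esym_genpoly (eq_bigr (fun i => (v i)%:P * 'X + 1)) => [|i _]; last first.
    by rewrite addrC.
  rewrite bigA_distr; apply: eq_bigr => S _.
  rewrite prod_if_mem [X in _ * X]big1 // mulr1 big_split /=.
  by rewrite -rmorph_prod prodr_const mul_polyC.
by rewrite coef_sumMXn.
Qed.

Lemma hsymf_widen {d : nat} (N : nat) (w : 'I_d -> R) (j : nat) : (j <= N)%N ->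
  hsymf R d w j =
  \sum_(a : {ffun 'I_d -> 'I_N.+1} | \sum_i (a i : nat) == j) \prod_i w i ^+ a i.
Proof.
move=> jN; have jN1 : (j.+1 <= N.+1)%N by [].
pose widen (b : {ffun 'I_d -> 'I_j.+1}) := [ffun i => widen_ord jN1 (b i)].
pose narrow (a : {ffun 'I_d -> 'I_N.+1}) : {ffun 'I_d -> 'I_j.+1} :=
  [ffun i => inord (a i)].
rewrite /hsymf (reindex_onto widen narrow) => [|a /eqP sum_a]; last first.
  apply/ffunP => i; rewrite !ffunE; apply/val_inj => /=.
  by rewrite inordK // ltnS -sum_a (bigD1 i) //= leq_addr.
apply: eq_big => [b|b _]; last by apply: eq_bigr => i _; rewrite ffunE.
have -> : narrow (widen b) == b.
  by apply/eqP/ffunP => i; rewrite !ffunE; apply/val_inj; rewrite /= inordK.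
by rewrite andbT; under [in RHS]eq_bigr do rewrite ffunE.
Qed.

Lemma coef_hsym_genpoly_trunc (N : nat) {d : nat} (w : 'I_d -> R) (j : nat) :
  (j <= N)%N -> (hsym_genpoly_trunc N w)`_j = (-1) ^+ j * hsymf R d w j.
Proof.
move=> jN; rewrite (hsymf_widen N) // mulr_sumr /hsym_genpoly_trunc.
have powE (c : R) a : (- (c%:P * 'X)) ^+ a = (-c) ^+ a *: 'X^a.
  by rewrite -mul_polyC -mulNr -polyCN exprMn rmorphXn.
under eq_bigr do under eq_bigr do rewrite powE.
rewrite bigA_distr_bigA /=.
under eq_bigr => a _.
  rewrite (eq_bigr (fun i => ((-1) ^+ a i * w i ^+ a i)%:P * 'X^(a i))) => [|i _];
    last by rewrite -exprNn mul_polyC.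
  rewrite big_split /= prodrXr -rmorph_prod mul_polyC.
  over.
rewrite coef_sumMXn; apply: eq_big => // a /eqP sum_a.
by rewrite big_split /= prodrXr sum_a.
Qed.

Lemma esym_hsym_genpoly_trunc (N : nat) {d : nat} (w : 'I_d -> R) :
  exists q, esym_genpoly w * hsym_genpoly_trunc N w = 1 + 'X^(N.+1) * q.
Proof.
rewrite -big_split /=.
apply: (big_ind (fun p => exists q, p = 1 + 'X^(N.+1) * q)).
- by exists 0; rewrite mulr0 addr0.
- by move=> _ _ [a ->] [b ->]; exists (a + b + 'X^(N.+1) * a * b); ring.
move=> i _; set y := - ((w i)%:P * 'X).
exists (- (- (w i)%:P) ^+ N.+1).
have -> : 1 + (w i)%:P * 'X = - (y - 1) by rewrite /y opprB opprK addrC.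
by rewrite mulNr -subrX1 opprB /y -mulNr exprMn mulrN mulrC.
Qed.

Lemma size_prod_1addCX {I : finType} (A : {set I}) (c : I -> R) :
  (size (\prod_(i in A) (1 + (c i)%:P * 'X))%R <= #|A|.+1)%N.
Proof.
apply: leq_trans (size_poly_prod_leq _ _) _.
have size_factor i : (size (1 + (c i)%:P * 'X)%R <= 2)%N.
  rewrite addrC -polyC1 size_MXaddC; case: ifP => // _.
  by rewrite ltnS size_polyC leq_b1.
have : (\sum_(i in A) size (1 + (c i)%:P * 'X)%R <= #|A| * 2)%N.
  by rewrite -sum_nat_const; apply: leq_sum => i _.
rewrite (eq_card (_ : _ =i A)) //; lia.
Qed.

Lemma esym_genpoly_subfamily {m d : nat} {v : 'I_m -> R} {w : 'I_d -> R}
    {f : 'I_d -> 'I_m} :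
  injective f -> (forall j, v (f j) = w j) ->
  exists2 P, esym_genpoly v = esym_genpoly w * P & (size P <= (m - d).+1)%N.
Proof.
move=> injf vfw; set S := f @: [set: 'I_d].
exists (\prod_(i in ~: S) (1 + (v i)%:P * 'X)); last first.
  have := cardsC S; rewrite card_imset // cardsT !card_ord => cardS.
  by apply: leq_trans (size_prod_1addCX (~: S) v) _; lia.
rewrite /esym_genpoly (bigID (mem S)) /=; congr (_ * _).
  rewrite big_imset /=; last by move=> a b _ _; apply: injf.
  by apply: eq_big => [j|j _]; rewrite ?in_setT ?vfw.
by apply: eq_bigl => i; rewrite inE.
Qed.

Lemma alt_esym_hsym_subfamily_eq0 {m d : nat} {v : 'I_m -> R} {w : 'I_d -> R}
    {f : 'I_d -> 'I_m} {r : nat} :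
  injective f -> (forall j, v (f j) = w j) -> (m - d < r)%N ->
  \sum_(j < r.+1) (-1) ^+ j * esymf R m v (r - j) * hsymf R d w j = 0.
Proof.
move=> injf vfw lt_r.
have [P Ev_eq size_P] := esym_genpoly_subfamily injf vfw.
have [q EH_eq] := esym_hsym_genpoly_trunc r w.
have coef_EH : (hsym_genpoly_trunc r w * esym_genpoly v)`_r =
    \sum_(j < r.+1) (-1) ^+ j * esymf R m v (r - j) * hsymf R d w j.
  rewrite coefM; apply: eq_bigr => j _.
  rewrite coef_hsym_genpoly_trunc ?coef_esym_genpoly; last by rewrite -ltnS ltn_ord.
  by rewrite mulrAC.
rewrite -coef_EH Ev_eq mulrA [_ * esym_genpoly w]mulrC EH_eq.
rewrite mulrDl mul1r coefD -mulrA coefXnM ltnSn addr0.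
exact: (leq_sizeP _ _ (leq_trans size_P lt_r)).
Qed.

Lemma prod_subr_esym {d : nat} (y : 'I_d -> R) (x : R) :
  \prod_i (x - y i) = \sum_(j < d.+1) (-1) ^+ j * x ^+ (d - j) * esymf R d y j.
Proof.
rewrite (eq_bigr (fun i => - y i + x)) => [|i _]; last by rewrite addrC.
rewrite bigA_distr.
under eq_bigr do rewrite prod_if_mem prodrN prodr_const.
rewrite /esymf (eq_bigr (fun j : 'I_d.+1 => \sum_(S : {set 'I_d})
   if #|S| == j then (-1) ^+ j * x ^+ (d - j) * \prod_(i in S) y i else 0));
  last by move=> j _; rewrite big_distrr big_mkcond.
rewrite exchange_big /=; apply: eq_bigr => S _.
have card_S : (#|S| < d.+1)%N by rewrite ltnS -[X in (_ <= X)%N](card_ord d) max_card.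
rewrite (bigD1 (Ordinal card_S)) //= eqxx [X in _ + X]big1 ?addr0 => [|j ne_j].
  have -> : #|~: S| = (d - #|S|)%N by have := cardsC S; rewrite card_ord; lia.
  by rewrite mulrAC.
by case: eqP => // card_Sj; rewrite -(inj_eq val_inj) /= card_Sj eqxx in ne_j.
Qed.

End SymmetricGeneratingPolynomials.

Lemma rmorph_esymf {R S : comNzRingType} (phi : {rmorphism R -> S})
    (m : nat) (v : 'I_m -> R) (r : nat) :
  phi (esymf R m v r) = esymf S m (fun i => phi (v i)) r.
Proof. by rewrite rmorph_sum; under eq_bigr do rewrite rmorph_prod. Qed.

Lemma rmorph_hsymf {R S : comNzRingType} (phi : {rmorphism R -> S})
    (m : nat) (v : 'I_m -> R) (r : nat) :
  phi (hsymf R m v r) = hsymf S m (fun i => phi (v i)) r.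
Proof.
rewrite rmorph_sum; apply: eq_bigr => a _.
by rewrite rmorph_prod; under eq_bigr do rewrite rmorphXn.
Qed.

Lemma ideal_gen_rmorph_eq0 {R S : comNzRingType} (phi : {rmorphism R -> S})
    {G : R -> Prop} {p : R} :
  ideal_gen R G p -> (forall g, G g -> phi g = 0) -> phi p = 0.
Proof.
move=> [s [sG ->]] phiG; rewrite rmorph_sum big_seq big1 // => cg cg_s.
by rewrite rmorphM (phiG _ (sG _ cg_s)) mulr0.
Qed.

Lemma surj_injective_section {I J : finType} {g : I -> J} :
  (forall j, exists i, g i = j) -> exists2 f : J -> I, injective f & cancel f g.
Proof.
move=> gsurj; have ex_i j : exists i, g i == j.
  by have [i gij] := gsurj j; exists i; apply/eqP.
have gK : cancel (fun j => xchoose (ex_i j)) g.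
  by move=> j; apply/eqP; exact: xchooseP (ex_i j).
by exists (fun j => xchoose (ex_i j)); first exact: can_inj gK.
Qed.

Lemma meval_alt_eh (n d k m : nat) (v : 'I_m -> {mpoly rat[n + d + k]})
    (r : nat) (z : 'I_(n + d + k) -> rat) :
  (alt_eh n d k m v r).@[z] =
  \sum_(j < r.+1) (-1) ^+ j * esymf rat m (fun i => (v i).@[z]) (r - j)
     * hsymf rat d (fun i => (yv n d k i).@[z]) j.
Proof.
rewrite rmorph_sum; apply: eq_bigr => j _.
by rewrite !rmorphM rmorphXn rmorphN rmorph1 rmorph_esymf rmorph_hsymf.
Qed.

Lemma meval_alt_xe (n d k : nat) (i : 'I_n) (z : 'I_(n + d + k) -> rat) :
  (alt_xe n d k i).@[z] = \prod_j ((xv n d k i).@[z] - (yv n d k j).@[z]).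
Proof.
rewrite prod_subr_esym rmorph_sum; apply: eq_bigr => j _.
by rewrite !rmorphM !rmorphXn rmorphN rmorph1 rmorph_esymf.
Qed.

Lemma Jgens_vanish_on_Zset (n k d : nat) (z : 'I_(n + d + k) -> rat)
    (p : {mpoly rat[n + d + k]}) :
  Zset n k d z -> Jgens n k d p -> p.@[z] = 0.
Proof.
move=> [[f [injf zf]] [g [gsurj zg]]] [[r lt_r ->]|[[r lt_r ->]|[i ->]]].
- rewrite meval_alt_eh; apply: (alt_esym_hsym_subfamily_eq0 injf) => // j.
  by rewrite !mevalXU zf.
- have [f' injf' gK] := surj_injective_section gsurj.
  rewrite meval_alt_eh; apply: (alt_esym_hsym_subfamily_eq0 injf') => // j.
  by rewrite !mevalXU zg gK.
- by rewrite meval_alt_xe (bigD1 (g i)) //= !mevalXU zg subrr mul0r.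
Qed.

Theorem lemma3p15 (n k d : nat) (hd : (0 < d)%N) (hdk : (d <= k)%N) (hkn : (k <= n)%N) :
  forall p : {mpoly rat[n + d + k]},
    J_Qt n k d p -> vanishing_ideal (n + d + k) (Zset n k d) p.
Proof.
move=> p Jp z Zz; apply: (ideal_gen_rmorph_eq0 (meval z) Jp) => g.
exact: Jgens_vanish_on_Zset.
Qed.
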